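(* Let $\mathcal{C}$ be a symmetric monoidal category with completely mixed states $\mu$. Specifying a dagger compact structure on $\mathcal{C}$ compatible with $\mu$ (i.e. a dagger making $\mathcal{C}$ dagger compact such that, setting $\top_A:=\mu_A^\dagger$, $\top$ is a discarding and every object has a dagger dual satisfying the discarding-compatibility equations below) is equivalent, via $\overline{\psi}=\psi^\dagger$ on states, to specifying a state dagger on $\mathcal{C}$ such that every object has a state dagger dual satisfying the discarding-compatibility equations, where $\top_A:=\overline{\mu_A}$.
   Context: Notation: $\mathcal{C}$ is a symmetric monoidal category with tensor $\otimes$, unit $I$, coherence isomorphisms (associators, unitors $\lambda,\rho$, symmetries $\sigma_{A,B}\colon A\otimes B\to B\otimes A$); unitors are suppressed. States are morphisms $I\to A$, effects are morphisms $A\to I$. Discarding: a family of effects $\top_A\colon A\to I$ with $\top_{A\otimes B}=\top_A\otimes\top_B$ and $\top_I=1_I$. Completely mixed states: a family of states $\mu_A\colon I\to A$ with $\mu_{A\otimes B}=\mu_A\otimes\mu_B$ and $\mu_I=1_I$ (not necessarily normalised). A dual of $A$ is $(A^*,\eta_A\colon I\to A^*\otimes A,\ \epsilon_A\colon A\otimes A^*\to I)$ satisfying the snake equations $(\epsilon_A\otimes 1_A)\circ(1_A\otimes\eta_A)=1_A$, $(1_{A^*}\otimes\epsilon_A)\circ(\eta_A\otimes 1_{A^*})=1_{A^*}$. Discarding-compatibility equations for a dual: $(\top_{A^*}\otimes 1_A)\circ\eta_A=\mu_A$ and $(1_{A^*}\otimes\top_A)\circ\eta_A=\mu_{A^*}$.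 Dagger compact: an identity-on-objects involutive contravariant functor $(-)^\dagger$ with $(f\otimes g)^\dagger=f^\dagger\otimes g^\dagger$, all coherence isomorphisms unitary, and every object having a dual with $\epsilon_A=(\sigma_{A^*,A}\circ\eta_A)^\dagger$ (a dagger dual). A state dagger assigns to each state $\psi$ of $A$ an effect $\overline{\psi}$ on $A$ with: $\overline{1_I}=1_I$; $\overline{\psi\otimes\phi}=\overline{\psi}\otimes\overline{\phi}$; for every state $\psi$ of $A\otimes B$ and state $\phi$ of $A$, $\overline{(\overline{\phi}\otimes 1_B)\circ\psi}=\overline{\psi}\circ(\phi\otimes 1_B)$; and for every state $\psi$ of $A$ and coherence isomorphism $\gamma\colon A\to A'$, $\overline{\gamma\circ\psi}=\overline{\psi}\circ\gamma^{-1}$. A state dagger dual is a dual with $\epsilon_A=\overline{\sigma_{A^*,A}\circ\eta_A}$. *)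

(* Unitors, which the paper suppresses, are written out explicitly. *)

Set Implicit Arguments.

Record SMC : Type := mkSMC {
  ob : Type;
  hom : ob -> ob -> Type;
  comp : forall {A B C : ob}, hom B C -> hom A B -> hom A C;
  idm : forall (A : ob), hom A A;
  tens : ob -> ob -> ob;
  tensm : forall {A B C D : ob}, hom A B -> hom C D -> hom (tens A C) (tens B D);
  unit : ob;
  assoc : forall A B C, hom (tens (tens A B) C) (tens A (tens B C));
  assoc_inv : forall A B C, hom (tens A (tens B C)) (tens (tens A B) C);
  lunit : forall A, hom (tens unit A) A;
  lunit_inv : forall A, hom A (tens unit A);
  runit : forall A, hom (tens A unit) A;
  runit_inv : forall A, hom A (tens A unit);
  sym : forall A B, hom (tens A B) (tens B A);
  comp_assoc : forall A B C D (f : hom A B) (g : hom B C) (h : hom C D),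
      comp h (comp g f) = comp (comp h g) f;
  comp_id_l : forall A B (f : hom A B), comp (idm B) f = f;
  comp_id_r : forall A B (f : hom A B), comp f (idm A) = f;
  tens_id : forall A B, tensm (idm A) (idm B) = idm (tens A B);
  tens_comp : forall A1 A2 A3 B1 B2 B3 (f1 : hom A1 A2) (f2 : hom A2 A3)
      (g1 : hom B1 B2) (g2 : hom B2 B3),
      tensm (comp f2 f1) (comp g2 g1) = comp (tensm f2 g2) (tensm f1 g1);
  assoc_iso1 : forall A B C, comp (assoc_inv A B C) (assoc A B C) = idm _;
  assoc_iso2 : forall A B C, comp (assoc A B C) (assoc_inv A B C) = idm _;
  lunit_iso1 : forall A, comp (lunit_inv A) (lunit A) = idm _;
  lunit_iso2 : forall A, comp (lunit A) (lunit_inv A) = idm _;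
  runit_iso1 : forall A, comp (runit_inv A) (runit A) = idm _;
  runit_iso2 : forall A, comp (runit A) (runit_inv A) = idm _;
  sym_inv : forall A B, comp (sym B A) (sym A B) = idm (tens A B);
  assoc_nat : forall A A' B B' C C' (f : hom A A') (g : hom B B') (h : hom C C'),
      comp (assoc A' B' C') (tensm (tensm f g) h)
      = comp (tensm f (tensm g h)) (assoc A B C);
  lunit_nat : forall A A' (f : hom A A'),
      comp (lunit A') (tensm (idm unit) f) = comp f (lunit A);
  runit_nat : forall A A' (f : hom A A'),
      comp (runit A') (tensm f (idm unit)) = comp f (runit A);
  sym_nat : forall A A' B B' (f : hom A A') (g : hom B B'),
      comp (sym A' B') (tensm f g) = comp (tensm g f) (sym A B);
  pentagon : forall A B C D,
      comp (assoc A B (tens C D)) (assoc (tens A B) C D)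
      = comp (tensm (idm A) (assoc B C D))
             (comp (assoc A (tens B C) D) (tensm (assoc A B C) (idm D)));
  triangle : forall A B,
      comp (tensm (idm A) (lunit B)) (assoc A unit B) = tensm (runit A) (idm B);
  hexagon : forall A B C,
      comp (assoc B C A) (comp (sym A (tens B C)) (assoc A B C))
      = comp (tensm (idm B) (sym A C))
             (comp (assoc B A C) (tensm (sym A B) (idm C)))
}.

Arguments comp {_ _ _ _} _ _.
Arguments idm {_} _.
Arguments tens {_} _ _.
Arguments tensm {_ _ _ _ _} _ _.
Arguments unit {_}.
Arguments assoc {_} _ _ _.
Arguments assoc_inv {_} _ _ _.
Arguments lunit {_} _.
Arguments lunit_inv {_} _.
Arguments runit {_} _.
Arguments runit_inv {_} _.
Arguments sym {_} _ _.

Declare Scope smc_scope.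
Delimit Scope smc_scope with smc.
Notation "g ∘ f" := (comp g f) (at level 40, left associativity) : smc_scope.
Notation "f ⊗ g" := (tensm f g) (at level 34, left associativity) : smc_scope.
Open Scope smc_scope.

Section Coh.
Variable K : SMC.
Inductive coh : forall A B : ob K, hom K A B -> hom K B A -> Prop :=
| coh_id : forall A, coh A A (idm A) (idm A)
| coh_assoc : forall A B C, coh _ _ (assoc A B C) (assoc_inv A B C)
| coh_assoc_inv : forall A B C, coh _ _ (assoc_inv A B C) (assoc A B C)
| coh_lunit : forall A, coh _ _ (lunit A) (lunit_inv A)
| coh_lunit_inv : forall A, coh _ _ (lunit_inv A) (lunit A)
| coh_runit : forall A, coh _ _ (runit A) (runit_inv A)
| coh_runit_inv : forall A, coh _ _ (runit_inv A) (runit A)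
| coh_sym : forall A B, coh _ _ (sym A B) (sym B A)
| coh_comp : forall A B C (f : hom K A B) f' (g : hom K B C) g',
    coh A B f f' -> coh B C g g' -> coh A C (g ∘ f) (f' ∘ g')
| coh_tens : forall A B C D (f : hom K A B) f' (g : hom K C D) g',
    coh A B f f' -> coh C D g g' -> coh _ _ (f ⊗ g) (f' ⊗ g').
End Coh.
Arguments coh {K A B} _ _.

Section Defs.
Context {K : SMC}.
Local Notation I := (@unit K).
Local Notation hom := (hom K).

Definition is_discarding (top : forall A, hom A I) : Prop :=
  (forall A B, top (tens A B) = lunit I ∘ (top A ⊗ top B)) /\ top I = idm I.

Definition is_completely_mixed (mu : forall A, hom I A) : Prop :=
  (forall A B, mu (tens A B) = (mu A ⊗ mu B) ∘ lunit_inv I) /\ mu I = idm I.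

Record dual_data (A : ob K) : Type := mkDual {
  dual_ob : ob K;
  dual_eta : hom I (tens dual_ob A);
  dual_eps : hom (tens A dual_ob) I
}.

Definition is_dual (A : ob K) (d : dual_data A) : Prop :=
  lunit A ∘ (dual_eps d ⊗ idm A) ∘ assoc_inv A (dual_ob d) A
    ∘ (idm A ⊗ dual_eta d) ∘ runit_inv A = idm A
  /\
  runit (dual_ob d) ∘ (idm (dual_ob d) ⊗ dual_eps d) ∘ assoc (dual_ob d) A (dual_ob d)
    ∘ (dual_eta d ⊗ idm (dual_ob d)) ∘ lunit_inv (dual_ob d) = idm (dual_ob d).

Definition discarding_compatible (top : forall A, hom A I) (mu : forall A, hom I A)
    (A : ob K) (d : dual_data A) : Prop :=
  lunit A ∘ (top (dual_ob d) ⊗ idm A) ∘ dual_eta d = mu A /\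
  runit (dual_ob d) ∘ (idm (dual_ob d) ⊗ top A) ∘ dual_eta d = mu (dual_ob d).

Definition is_dagger (dag : forall A B, hom A B -> hom B A) : Prop :=
  (forall A B C (f : hom A B) (g : hom B C), dag A C (g ∘ f) = dag A B f ∘ dag B C g) /\
  (forall A, dag A A (idm A) = idm A) /\
  (forall A B (f : hom A B), dag B A (dag A B f) = f) /\
  (forall A B C D (f : hom A B) (g : hom C D),
      dag (tens A C) (tens B D) (f ⊗ g) = dag A B f ⊗ dag C D g) /\
  (forall A B (g : hom A B) g', coh g g' -> dag A B g = g').

Definition is_dagger_dual (dag : forall A B, hom A B -> hom B A)
    (A : ob K) (d : dual_data A) : Prop :=
  is_dual d /\
  dual_eps d = dag I (tens A (dual_ob d)) (sym (dual_ob d) A ∘ dual_eta d).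

Definition is_dagger_compact (dag : forall A B, hom A B -> hom B A) : Prop :=
  is_dagger dag /\ forall A, exists d : dual_data A, is_dagger_dual dag d.

Definition compatible_dagger (mu : forall A, hom I A)
    (dag : forall A B, hom A B -> hom B A) : Prop :=
  is_dagger_compact dag /\
  is_discarding (fun A => dag I A (mu A)) /\
  forall A, exists d : dual_data A,
    is_dagger_dual dag d /\ discarding_compatible (fun X => dag I X (mu X)) mu d.

Definition is_state_dagger (sd : forall A, hom I A -> hom A I) : Prop :=
  sd I (idm I) = idm I /\
  (forall A B (psi : hom I A) (phi : hom I B),
      sd (tens A B) ((psi ⊗ phi) ∘ lunit_inv I) = lunit I ∘ (sd A psi ⊗ sd B phi)) /\
  (forall A B (psi : hom I (tens A B)) (phi : hom I A),
      sd B (lunit B ∘ (sd A phi ⊗ idm B) ∘ psi)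
      = sd (tens A B) psi ∘ (phi ⊗ idm B) ∘ lunit_inv B) /\
  (forall A A' (psi : hom I A) (g : hom A A') g',
      coh g g' -> sd A' (g ∘ psi) = sd A psi ∘ g').

Definition is_state_dagger_dual (sd : forall A, hom I A -> hom A I)
    (A : ob K) (d : dual_data A) : Prop :=
  is_dual d /\
  dual_eps d = sd (tens A (dual_ob d)) (sym (dual_ob d) A ∘ dual_eta d).

Definition compatible_state_dagger (mu : forall A, hom I A)
    (sd : forall A, hom I A -> hom A I) : Prop :=
  is_state_dagger sd /\
  forall A, exists d : dual_data A,
    is_state_dagger_dual sd d /\ discarding_compatible (fun X => sd X (mu X)) mu d.

End Defs.

Arguments dual_ob {_ _} _.
Arguments dual_eta {_ _} _.
Arguments dual_eps {_ _} _.

(* A state dagger already determines the dagger of every morphism.  Call g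
   an adjoint of f : A -> B when bar((f ⊗ 1_X) ψ) = bar(ψ) (g ⊗ 1_X) for
   every state ψ of A ⊗ X.  Adjoints compose, tensor, invert coherence
   isomorphisms, and a state φ and its effect bar(φ) are adjoint to each
   other.  By the snake equation every f : A -> B factors through coherence
   isomorphisms, the effect ε_A = bar(σ η_A) and the state (1 ⊗ f) η_A, so f
   has an adjoint; it is unique because g is recovered by the snake equation
   from ε_A (g ⊗ 1) = bar((f ⊗ 1) σ η_A).  Choosing adjoints gives the
   dagger, and any dagger inducing the state dagger sends f to an adjoint. *)

From Stdlib Require Import ClassicalEpsilon.

Section SMCFacts.
Context {K : SMC}.

Lemma tens_comp_idl {A X Y Z : ob K} (f : hom K X Y) (g : hom K Y Z) :
  idm A ⊗ (g ∘ f) = (idm A ⊗ g) ∘ (idm A ⊗ f).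
Proof. rewrite <- tens_comp, comp_id_l. reflexivity. Qed.

Lemma tens_comp_idr {A X Y Z : ob K} (f : hom K X Y) (g : hom K Y Z) :
  (g ∘ f) ⊗ idm A = (g ⊗ idm A) ∘ (f ⊗ idm A).
Proof. rewrite <- tens_comp, comp_id_l. reflexivity. Qed.

Lemma tens_split_l {A B C D : ob K} (f : hom K A B) (g : hom K C D) :
  f ⊗ g = (f ⊗ idm D) ∘ (idm A ⊗ g).
Proof. rewrite <- tens_comp, comp_id_l, comp_id_r. reflexivity. Qed.

Lemma tens_split_r {A B C D : ob K} (f : hom K A B) (g : hom K C D) :
  f ⊗ g = (idm B ⊗ g) ∘ (f ⊗ idm C).
Proof. rewrite <- tens_comp, comp_id_l, comp_id_r. reflexivity. Qed.

Lemma tens_interchange {A B C D : ob K} (f : hom K A B) (g : hom K C D) :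
  (f ⊗ idm D) ∘ (idm A ⊗ g) = (idm B ⊗ g) ∘ (f ⊗ idm C).
Proof. rewrite <- tens_split_l, <- tens_split_r. reflexivity. Qed.

Lemma comp_assoc_eq {A B C D E : ob K} (a : hom K B C) (b : hom K A B)
    (c : hom K D C) (d : hom K A D) (x : hom K E A) :
  a ∘ b = c ∘ d -> a ∘ (b ∘ x) = c ∘ (d ∘ x).
Proof. intros Heq. rewrite !comp_assoc, Heq. reflexivity. Qed.

Lemma iso_transpose {A B C D : ob K} (a : hom K A B) (a' : hom K B A)
    (b : hom K C D) (b' : hom K D C) (x : hom K A C) (y : hom K B D) :
  b ∘ x = y ∘ a -> a ∘ a' = idm B -> b' ∘ b = idm C -> x ∘ a' = b' ∘ y.
Proof.
  intros Hsq Ha Hb.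
  transitivity (((b' ∘ b) ∘ x) ∘ a').
  - rewrite Hb, comp_id_l. reflexivity.
  - rewrite <- (comp_assoc _ _ _ _ _ x b b'), Hsq.
    rewrite <- !comp_assoc, Ha, comp_id_r. reflexivity.
Qed.

Lemma assoc_inv_nat {A A' B B' C C' : ob K} (f : hom K A A')
    (g : hom K B B') (h : hom K C C') :
  ((f ⊗ g) ⊗ h) ∘ assoc_inv A B C = assoc_inv A' B' C' ∘ (f ⊗ (g ⊗ h)).
Proof.
  apply (iso_transpose (assoc _ _ _) _ (assoc _ _ _));
    [apply assoc_nat | apply assoc_iso2 | apply assoc_iso1]. Qed.

Lemma lunit_inv_nat {A A' : ob K} (f : hom K A A') :
  (idm unit ⊗ f) ∘ lunit_inv A = lunit_inv A' ∘ f.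
Proof.
  apply (iso_transpose (lunit _) _ (lunit _));
    [apply lunit_nat | apply lunit_iso2 | apply lunit_iso1]. Qed.

Lemma runit_inv_nat {A A' : ob K} (f : hom K A A') :
  (f ⊗ idm unit) ∘ runit_inv A = runit_inv A' ∘ f.
Proof.
  apply (iso_transpose (runit _) _ (runit _));
    [apply runit_nat | apply runit_iso2 | apply runit_iso1]. Qed.

Lemma assoc_conj {A B C X : ob K} (f : hom K A B) :
  (f ⊗ idm C) ⊗ idm X = assoc_inv B C X ∘ (f ⊗ idm (tens C X)) ∘ assoc A C X.
Proof.
  rewrite <- tens_id, <- comp_assoc, <- assoc_nat, comp_assoc, assoc_iso1, comp_id_l.
  reflexivity.
Qed.

Lemma sym_conj {A B C : ob K} (f : hom K A B) :
  idm C ⊗ f = (sym B C ∘ (f ⊗ idm C)) ∘ sym C A.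
Proof. rewrite sym_nat, <- comp_assoc, sym_inv, comp_id_r. reflexivity. Qed.

Lemma coh_inv {A B : ob K} (g : hom K A B) g' : coh g g' -> coh g' g.
Proof. induction 1; econstructor; eauto. Qed.

Lemma hom_of_name {A B : ob K} (d : dual_data A) : is_dual d -> forall f : hom K A B,
  f = lunit B ∘ (dual_eps d ⊗ idm B) ∘ assoc_inv A (dual_ob d) B
    ∘ (idm A ⊗ ((idm (dual_ob d) ⊗ f) ∘ dual_eta d)) ∘ runit_inv A.
Proof.
  intros [Hsnake _] f.
  rewrite tens_comp_idl, <- !comp_assoc.
  rewrite <- (comp_assoc_eq _ _ _ _ _ (assoc_inv_nat (idm A) (idm _) f)), tens_id.
  rewrite (comp_assoc_eq _ _ _ _ _ (tens_interchange _ _)).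
  rewrite (comp_assoc_eq _ _ _ _ _ (lunit_nat _ _ _ _)).
  rewrite <- !comp_assoc in Hsnake. rewrite Hsnake, comp_id_r. reflexivity.
Qed.

Lemma hom_of_coname {A B : ob K} (d : dual_data A) : is_dual d -> forall g : hom K B A,
  g = lunit A ∘ ((dual_eps d ∘ (g ⊗ idm (dual_ob d))) ⊗ idm A)
    ∘ assoc_inv B (dual_ob d) A ∘ (idm B ⊗ dual_eta d) ∘ runit_inv B.
Proof.
  intros [Hsnake _] g.
  rewrite tens_comp_idr, <- !comp_assoc.
  rewrite (comp_assoc_eq _ _ _ _ _ (assoc_inv_nat g (idm _) (idm _))), tens_id.
  rewrite (comp_assoc_eq _ _ _ _ _ (tens_interchange _ _)), runit_inv_nat.
  rewrite !comp_assoc, Hsnake, comp_id_l. reflexivity.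
Qed.

End SMCFacts.

Lemma state_dagger_of_dagger {K : SMC} (dag : forall A B : ob K, hom K A B -> hom K B A) :
  is_dagger dag -> is_state_dagger (fun A psi => dag unit A psi).
Proof.
  intros (Dcomp & Did & Dinvol & Dtens & Dcoh).
  split; [| split; [| split]].
  - apply Did.
  - intros A B psi phi.
    rewrite Dcomp, Dtens, (Dcoh _ _ _ _ (coh_lunit_inv _ _)). reflexivity.
  - intros A B psi phi.
    rewrite !Dcomp, Dtens, Dinvol, Did, (Dcoh _ _ _ _ (coh_lunit _ _)), comp_assoc.
    reflexivity.
  - intros A A' psi g g' Hg. rewrite Dcomp, (Dcoh _ _ _ _ Hg). reflexivity.
Qed.

Definition sd_adjoint {K : SMC} (sd : forall A : ob K, hom K unit A -> hom K A unit)
    {A B : ob K} (f : hom K A B) (g : hom K B A) : Prop :=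
  forall (X : ob K) (psi : hom K unit (tens A X)),
    sd (tens B X) ((f ⊗ idm X) ∘ psi) = sd (tens A X) psi ∘ (g ⊗ idm X).

Definition sd_biadjoint {K : SMC} (sd : forall A : ob K, hom K unit A -> hom K A unit)
    {A B : ob K} (f : hom K A B) (g : hom K B A) : Prop :=
  sd_adjoint sd f g /\ sd_adjoint sd g f.

Section Adjoints.
Context {K : SMC} (sd : forall A : ob K, hom K unit A -> hom K A unit)
  (Hsd : is_state_dagger sd).

Lemma state_dagger_coh {A A' : ob K} (psi : hom K unit A) (g : hom K A A') g' :
  coh g g' -> sd A' (g ∘ psi) = sd A psi ∘ g'.
Proof. apply Hsd. Qed.

Lemma adjoint_coh {A B : ob K} (g : hom K A B) g' : coh g g' -> sd_adjoint sd g g'.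
Proof. intros Hg X psi. apply state_dagger_coh, coh_tens; [exact Hg | apply coh_id]. Qed.

Lemma adjoint_comp {A B C : ob K} (f : hom K A B) g (f' : hom K B C) g' :
  sd_adjoint sd f g -> sd_adjoint sd f' g' -> sd_adjoint sd (f' ∘ f) (g ∘ g').
Proof.
  intros Hf Hf' X psi.
  rewrite !tens_comp_idr, <- comp_assoc, Hf', Hf, comp_assoc. reflexivity.
Qed.

Lemma adjoint_tens_r {A B C : ob K} (f : hom K A B) g :
  sd_adjoint sd f g -> sd_adjoint sd (f ⊗ idm C) (g ⊗ idm C).
Proof.
  intros Hf X psi. rewrite !assoc_conj, <- !comp_assoc.
  rewrite (state_dagger_coh _ _ _ (coh_assoc_inv _ _ _ _)), Hf.
  rewrite (state_dagger_coh _ _ _ (coh_assoc _ _ _ _)), <- !comp_assoc. reflexivity.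
Qed.

Lemma adjoint_tens_l {A B C : ob K} (f : hom K A B) g :
  sd_adjoint sd f g -> sd_adjoint sd (idm C ⊗ f) (idm C ⊗ g).
Proof.
  intros Hf. rewrite (sym_conj f), (sym_conj g), <- (comp_assoc _ _ _ _ _ (sym C B)).
  apply adjoint_comp; [apply adjoint_coh; constructor |].
  apply adjoint_comp; [apply adjoint_tens_r, Hf | apply adjoint_coh; constructor].
Qed.

Lemma adjoint_tens {A B C D : ob K} (f : hom K A B) g (f' : hom K C D) g' :
  sd_adjoint sd f g -> sd_adjoint sd f' g' -> sd_adjoint sd (f ⊗ f') (g ⊗ g').
Proof.
  intros Hf Hf'. rewrite (tens_split_l f f'), (tens_split_r g g').
  apply adjoint_comp; [apply adjoint_tens_l, Hf' | apply adjoint_tens_r, Hf].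
Qed.

Lemma adjoint_state {A : ob K} (phi : hom K unit A) : sd_adjoint sd phi (sd A phi).
Proof.
  intros X psi.
  (* Via λ_X, ψ becomes a product state of I ⊗ X, to which the tensor axiom applies. *)
  assert (Epsi : psi = lunit_inv X ∘ (lunit X ∘ psi))
    by (rewrite comp_assoc, lunit_iso1, comp_id_l; reflexivity).
  rewrite Epsi. generalize (lunit X ∘ psi). intros chi. clear Epsi psi.
  rewrite (state_dagger_coh _ _ _ (coh_lunit_inv _ _)).
  rewrite <- (lunit_inv_nat chi), comp_assoc, <- tens_split_l.
  destruct Hsd as (_ & Htens & _). rewrite Htens.
  rewrite (tens_split_r (sd A phi)), comp_assoc, lunit_nat. reflexivity.
Qed.

Lemma adjoint_effect {A : ob K} (phi : hom K unit A) : sd_adjoint sd (sd A phi) phi.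
Proof.
  intros X psi.
  rewrite <- (comp_id_l _ _ _ ((sd A phi ⊗ idm X) ∘ psi)), <- (lunit_iso1 _ X).
  rewrite <- comp_assoc, (state_dagger_coh _ _ _ (coh_lunit_inv _ _)).
  rewrite (comp_assoc _ _ _ _ _ psi).
  destruct Hsd as (_ & _ & Hpartial & _). rewrite Hpartial.
  rewrite <- comp_assoc, lunit_iso1, comp_id_r. reflexivity.
Qed.

Lemma biadjoint_comp {A B C : ob K} (f : hom K A B) g (f' : hom K B C) g' :
  sd_biadjoint sd f g -> sd_biadjoint sd f' g' -> sd_biadjoint sd (f' ∘ f) (g ∘ g').
Proof. intros [] []. split; apply adjoint_comp; assumption. Qed.

Lemma biadjoint_tens {A B C D : ob K} (f : hom K A B) g (f' : hom K C D) g' :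
  sd_biadjoint sd f g -> sd_biadjoint sd f' g' -> sd_biadjoint sd (f ⊗ f') (g ⊗ g').
Proof. intros [] []. split; apply adjoint_tens; assumption. Qed.

Lemma biadjoint_coh {A B : ob K} (g : hom K A B) g' : coh g g' -> sd_biadjoint sd g g'.
Proof. intros Hg. split; apply adjoint_coh; [| apply coh_inv]; exact Hg. Qed.

Lemma biadjoint_state {A : ob K} (phi : hom K unit A) : sd_biadjoint sd phi (sd A phi).
Proof. split; [apply adjoint_state | apply adjoint_effect]. Qed.

Lemma biadjoint_effect {A : ob K} (phi : hom K unit A) : sd_biadjoint sd (sd A phi) phi.
Proof. split; [apply adjoint_effect | apply adjoint_state]. Qed.

Lemma adjoint_unique {A B : ob K} (d : dual_data A) : is_state_dagger_dual sd d ->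
  forall (f : hom K A B) g1 g2, sd_adjoint sd f g1 -> sd_adjoint sd f g2 -> g1 = g2.
Proof.
  intros [Hdual Heps] f g1 g2 H1 H2.
  assert (Econame : dual_eps d ∘ (g1 ⊗ idm _) = dual_eps d ∘ (g2 ⊗ idm _)).
  { rewrite Heps, <- (H1 _ (sym _ _ ∘ dual_eta d)), <- (H2 _ (sym _ _ ∘ dual_eta d)).
    reflexivity. }
  rewrite (hom_of_coname d Hdual g1), (hom_of_coname d Hdual g2), Econame.
  reflexivity.
Qed.

Lemma biadjoint_exists {A B : ob K} (d : dual_data A) : is_state_dagger_dual sd d ->
  forall f : hom K A B, exists g, sd_biadjoint sd f g.
Proof.
  intros [Hdual Heps] f.
  rewrite (hom_of_name d Hdual f), Heps. eexists.
  repeat apply biadjoint_comp.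
  - apply biadjoint_coh, coh_runit_inv.
  - apply biadjoint_tens; [apply biadjoint_coh, coh_id | apply biadjoint_state].
  - apply biadjoint_coh, coh_assoc_inv.
  - apply biadjoint_tens; [apply biadjoint_effect | apply biadjoint_coh, coh_id].
  - apply biadjoint_coh, coh_lunit.
Qed.

Lemma adjoint_dagger (dag : forall A B : ob K, hom K A B -> hom K B A) :
  is_dagger dag -> (forall A (psi : hom K unit A), dag unit A psi = sd A psi) ->
  forall A B (f : hom K A B), sd_adjoint sd f (dag A B f).
Proof.
  intros (Dcomp & Did & _ & Dtens & _) Hstates A B f X psi.
  rewrite <- !Hstates, Dcomp, Dtens, Did. reflexivity.
Qed.

End Adjoints.

Lemma is_discarding_state_dagger {K : SMC} (mu : forall A : ob K, hom K unit A)
    (sd : forall A : ob K, hom K unit A -> hom K A unit) :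
  is_completely_mixed mu -> is_state_dagger sd -> is_discarding (fun A => sd A (mu A)).
Proof.
  intros [Hmu_tens Hmu_unit] (Hsd_unit & Hsd_tens & _).
  split.
  - intros A B. rewrite Hmu_tens. apply Hsd_tens.
  - rewrite Hmu_unit. exact Hsd_unit.
Qed.

Section DaggerOfStateDagger.
Context {K : SMC} (sd : forall A : ob K, hom K unit A -> hom K A unit)
  (Hsd : is_state_dagger sd)
  (Hduals : forall A : ob K, exists d : dual_data A, is_state_dagger_dual sd d).

Lemma biadjoint_exists_all {A B : ob K} (f : hom K A B) : exists g, sd_biadjoint sd f g.
Proof. destruct (Hduals A) as [d Hd]. exact (biadjoint_exists sd Hsd d Hd f). Qed.

Lemma adjoint_unique_all {A B : ob K} (f : hom K A B) g1 g2 :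
  sd_adjoint sd f g1 -> sd_adjoint sd f g2 -> g1 = g2.
Proof. destruct (Hduals A) as [d Hd]. exact (adjoint_unique sd d Hd f g1 g2). Qed.

Definition dagger_of_sd (A B : ob K) (f : hom K A B) : hom K B A :=
  proj1_sig (constructive_indefinite_description _ (biadjoint_exists_all f)).

Lemma dagger_of_sd_biadjoint {A B : ob K} (f : hom K A B) :
  sd_biadjoint sd f (dagger_of_sd A B f).
Proof. exact (proj2_sig (constructive_indefinite_description _ _)). Qed.

Lemma dagger_of_sd_adjoint {A B : ob K} (f : hom K A B) : sd_adjoint sd f (dagger_of_sd A B f).
Proof. apply dagger_of_sd_biadjoint. Qed.

Lemma dagger_of_sd_state {A : ob K} (psi : hom K unit A) : dagger_of_sd unit A psi = sd A psi.
Proof. apply (adjoint_unique_all psi); [apply dagger_of_sd_adjoint | apply (adjoint_state sd Hsd)]. Qed.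

Lemma is_dagger_dagger_of_sd : is_dagger dagger_of_sd.
Proof.
  split; [| split; [| split; [| split]]]; intros;
    apply (adjoint_unique_all _ _ _ (dagger_of_sd_adjoint _)).
  - apply adjoint_comp; apply dagger_of_sd_adjoint.
  - apply (adjoint_coh sd Hsd), coh_id.
  - apply dagger_of_sd_biadjoint.
  - apply (adjoint_tens sd Hsd); apply dagger_of_sd_adjoint.
  - apply (adjoint_coh sd Hsd). assumption.
Qed.

Lemma dagger_of_sd_unique (dag : forall A B : ob K, hom K A B -> hom K B A) :
  is_dagger dag -> (forall A (psi : hom K unit A), dag unit A psi = sd A psi) ->
  forall A B (f : hom K A B), dag A B f = dagger_of_sd A B f.
Proof.
  intros Hdag Hstates A B f.
  apply (adjoint_unique_all f); [apply (adjoint_dagger sd dag Hdag Hstates) | apply dagger_of_sd_adjoint].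
Qed.

Lemma dagger_dual_of_sd {A : ob K} (d : dual_data A) :
  is_state_dagger_dual sd d -> is_dagger_dual dagger_of_sd d.
Proof. intros [Hdual Heps]. split; [exact Hdual | rewrite dagger_of_sd_state; exact Heps]. Qed.

Lemma compatible_dagger_of_sd (mu : forall A : ob K, hom K unit A) :
  is_completely_mixed mu ->
  (forall A, exists d : dual_data A,
     is_state_dagger_dual sd d /\ discarding_compatible (fun X => sd X (mu X)) mu d) ->
  compatible_dagger mu dagger_of_sd.
Proof.
  intros Hmu Hcompat.
  split; [split |].
  - exact is_dagger_dagger_of_sd.
  - intros A. destruct (Hduals A) as [d Hd]. exists d. apply dagger_dual_of_sd, Hd.
  - split.
    + destruct (is_discarding_state_dagger mu sd Hmu Hsd) as [Htens Hunit].
      split; [intros X Y |]; rewrite !dagger_of_sd_state; [apply Htens | exact Hunit].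
    + intros A. destruct (Hcompat A) as [d [Hd Hdc]]. exists d.
      split; [apply dagger_dual_of_sd, Hd |].
      unfold discarding_compatible in *. rewrite !dagger_of_sd_state. exact Hdc.
Qed.

End DaggerOfStateDagger.

Theorem mainTheorem2 (K : SMC) (mu : forall A : ob K, hom K unit A)
  (Hmu : is_completely_mixed mu) :
  (* restricting a compatible dagger to states gives a compatible state dagger *)
  (forall dag : forall A B : ob K, hom K A B -> hom K B A,
      compatible_dagger mu dag ->
      compatible_state_dagger mu (fun A psi => dag unit A psi)) /\
  (* every compatible state dagger is the restriction of a unique compatible dagger *)
  (forall sd : forall A : ob K, hom K unit A -> hom K A unit,
      compatible_state_dagger mu sd ->
      exists dag : forall A B : ob K, hom K A B -> hom K B A,
        compatible_dagger mu dag /\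
        (forall A (psi : hom K unit A), dag unit A psi = sd A psi) /\
        (forall dag' : forall A B : ob K, hom K A B -> hom K B A,
            compatible_dagger mu dag' ->
            (forall A (psi : hom K unit A), dag' unit A psi = sd A psi) ->
            forall A B (f : hom K A B), dag' A B f = dag A B f)).
Proof.
  split.
  - intros dag [[Hdag _] [_ Hduals]].
    split; [exact (state_dagger_of_dagger dag Hdag) | exact Hduals].
  - intros sd [Hsd Hcompat].
    assert (Hduals : forall A, exists d : dual_data A, is_state_dagger_dual sd d).
    { intros A. destruct (Hcompat A) as [d [Hd _]]. exists d. exact Hd. }
    exists (dagger_of_sd sd Hsd Hduals). split; [| split].
    + exact (compatible_dagger_of_sd sd Hsd Hduals mu Hmu Hcompat).
    + apply dagger_of_sd_state.
    + intros dag' [[Hdag' _] _]. exact (dagger_of_sd_unique sd Hsd Hduals dag' Hdag').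
Qed.
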